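(* Let $\sigma,\tau,\bar\sigma,\bar\tau$ satisfy the Standing Hypothesis. Let $m,n,m',n'$ be positive integers with $m+n=m'+n'$, and let $x,x'$ be non-negative integers with $x,x'\le\min\{m,n,m',n'\}+1$. Then $$K_{m,n}(x)-K_{m',n'}(x)=K_{m,n}(x')-K_{m',n'}(x').$$
   Context: Skew diagrams: for partitions $\mu\subseteq\lambda$, the skew diagram $\lambda/\mu$ is the set of boxes $(i,j)$ with $\mu_i<j\le\lambda_i$; skew diagrams are identified up to deleting empty rows or columns. $s_{\lambda/\mu}=\sum_T x^{c(T)}$ over semistandard Young tableaux of shape $\lambda/\mu$. Overlap notation: for $\alpha=(\alpha_1,\dots,\alpha_L)$ with $\alpha_i\ge1$ and $\beta=(\beta_1,\dots,\beta_{L-1})$ with $0\le\beta_i\le\min\{\alpha_i,\alpha_{i+1}\}$, $(\alpha\,|\,\beta)$ is the skew diagram $\lambda/\mu$ with $L$ nonempty rows, $\lambda_i-\mu_i=\alpha_i$ and $\lambda_{i+1}-\mu_i=\beta_i$; $\{\alpha\,|\,\beta\}$ is its skew Schur function. Commas denote concatenation; $a^j$ is $j$ copies of $a$. Standing Hypothesis: $\sigma=(\sigma_1,\dots,\sigma_s)$, $\tau=(\tau_1,\dots,\tau_t)$ compositions, $s,t\ge0$; $\bar\sigma,\bar\tau$ sequences of non-negative integers of lengths $s,t$; $\bar\sigma_s=1$ if $s>0$; $\bar\tau_1=1$ if $t>0$; $\bar\sigma_i\le\min\{\sigma_i,\sigma_{i+1}\}$ ($1\le i<s$), $\bar\tau_i\le\min\{\tau_i,\tau_{i-1}\}$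 ($1<i\le t$). $\sigma\backslash\sigma_s$ removes the last part of $\sigma$, $\tau\backslash\tau_1$ removes the first part of $\tau$, similarly for $\bar\sigma,\bar\tau$. Definition of $K$: for integers $m,n\ge1$ and $0\le x\le\min\{m,n\}+1$, $$K_{m,n}(x)=\begin{cases}\{\sigma,m,n,\tau\,|\,\bar\sigma,x,\bar\tau\}&x\le m,\ x\le n;\\ -\{\sigma\backslash\sigma_s,m+\sigma_s,n,\tau\,|\,\bar\sigma\backslash\bar\sigma_s,x,\bar\tau\}&x=m+1,\ x\le n;\\ -\{\sigma,m,n+\tau_1,\tau\backslash\tau_1\,|\,\bar\sigma,x,\bar\tau\backslash\bar\tau_1\}&x\le m,\ x=n+1;\\ \{\sigma\backslash\sigma_s,m+\sigma_s,n+\tau_1,\tau\backslash\tau_1\,|\,\bar\sigma\backslash\bar\sigma_s,x,\bar\tau\backslash\bar\tau_1\}&x=m+1,\ x=n+1,\end{cases}$$ where any term containing $\sigma\backslash\sigma_s$ is set to $0$ if $s=0$, and any term containing $\tau\backslash\tau_1$ is set to $0$ if $t=0$. *)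

From HB Require Import structures.
From mathcomp Require Import all_boot all_order all_algebra.
Set Implicit Arguments. Unset Strict Implicit. Unset Printing Implicit Defensive.
Import GRing.Theory.
Local Open Scope ring_scope.

(* Skew diagram in overlap notation (alpha | beta), rows numbered 0..L-1 from
   top to bottom (English convention).  [starts a b] gives the starting column
   (0-based) of each row: the bottom row starts in column 0, and
   start_i = start_{i+1} + a_{i+1} - b_i, so that row i occupies columns
   [start_i, start_i + a_i) and rows i, i+1 share exactly b_i columns. *)
Fixpoint starts (a b : seq nat) : seq nat :=
  match a with
  | [::] => [::]
  | _ :: a' =>
      match a' with
      | [::] => [:: 0%N]
      | a2 :: _ =>
          let r := starts a' (behead b) in
          (head 0%N r + a2 - head 0%N b)%N :: r
      end
  end.

(* a generous bound on the number of columns *)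
Definition width (a b : seq nat) : nat := (sumn (starts a b) + sumn a)%N.

Definition in_diag (a b : seq nat) (p : 'I_(size a) * 'I_(width a b)) : bool :=
  let st := nth 0%N (starts a b) p.1 in
  (st <= p.2 < st + nth 0%N a p.1)%N.

Arguments in_diag : clear implicits.
Definition box (a b : seq nat) : finType :=
  {p : 'I_(size a) * 'I_(width a b) | in_diag a b p}.

Definition brow a b (u : box a b) : nat := (val u).1.
Definition bcol a b (u : box a b) : nat := (val u).2.

(* semistandard: weakly increasing along rows, strictly increasing down columns;
   entries in 'I_N stand for 1..N *)
Definition is_ssyt (a b : seq nat) (N : nat) (T : {ffun box a b -> 'I_N}) : bool :=
  [forall u : box a b, forall v : box a b,
     ((brow u == brow v) && (bcol u < bcol v)%N ==> (T u <= T v)%N) &&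
     ((bcol u == bcol v) && (brow u < brow v)%N ==> (T u < T v)%N)].

Definition skew_schur (R : comPzRingType) (N : nat) (xv : 'I_N -> R)
    (a b : seq nat) : R :=
  \sum_(T : {ffun box a b -> 'I_N} | is_ssyt T) \prod_(u : box a b) xv (T u).

(* Standing Hypothesis (0-based indices) *)
Definition standing_hyp (sg ta sgb tab : seq nat) : Prop :=
  [/\ all (fun k => 0 < k)%N sg, all (fun k => 0 < k)%N ta,
      size sgb = size sg, size tab = size ta &
      [/\ (0 < size sg)%N -> last 0%N sgb = 1%N,
          (0 < size ta)%N -> head 0%N tab = 1%N,
          forall i, (i.+1 < size sg)%N ->
             (nth 0%N sgb i <= minn (nth 0%N sg i) (nth 0%N sg i.+1))%N &
          forall i, (0 < i < size ta)%N ->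
             (nth 0%N tab i <= minn (nth 0%N ta i) (nth 0%N ta i.-1))%N]].

(* K_{m,n}(x); outside the domain 0 <= x <= min(m,n)+1 it is set to 0
   (never used there). *)
Definition Kfun (R : comPzRingType) (N : nat) (xv : 'I_N -> R)
    (sg ta sgb tab : seq nat) (m n x : nat) : R :=
  let s := size sg in let t := size ta in
  let sgi := take s.-1 sg in let sgs := last 0%N sg in
  let sgbi := take s.-1 sgb in
  let ta1 := head 0%N ta in let tat := behead ta in let tabt := behead tab in
  if (x <= m)%N && (x <= n)%N then
    skew_schur xv (sg ++ [:: m; n] ++ ta) (sgb ++ [:: x] ++ tab)
  else if (x == m.+1) && (x <= n)%N then
    (if s == 0%N then 0 else
     - skew_schur xv (sgi ++ [:: (m + sgs)%N; n] ++ ta) (sgbi ++ [:: x] ++ tab))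
  else if (x <= m)%N && (x == n.+1) then
    (if t == 0%N then 0 else
     - skew_schur xv (sg ++ [:: m; (n + ta1)%N] ++ tat) (sgb ++ [:: x] ++ tabt))
  else if (x == m.+1) && (x == n.+1) then
    (if (s == 0%N) || (t == 0%N) then 0 else
     skew_schur xv (sgi ++ [:: (m + sgs)%N; (n + ta1)%N] ++ tat)
                   (sgbi ++ [:: x] ++ tabt))
  else 0.

From HB Require Import structures.
From mathcomp Require Import all_boot all_algebra zify ring.
Import GRing.Theory.
Local Open Scope ring_scope.
Set Implicit Arguments. Unset Strict Implicit. Unset Printing Implicit Defensive.

(* Write P_m = {sigma, m | sigma-bar}, Q_n = {n, tau | tau-bar},
   Z_L = {sigma, L, tau | sigma-bar, tau-bar} and let h_k be the complete
   homogeneous symmetric function (h_{-1} = 0).  The proof establishes the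
   closed form
       K_{m,n}(x) = P_m Q_n - h_{x-1} Z_{m+n-x+1}        (0 <= x <= min(m,n)+1);
   since m + n = m' + n', the h-terms cancel in K_{m,n}(x) - K_{m',n'}(x).

   The closed form rests on the Jacobi-Trudi type recurrence
       {alpha, m, n, beta | abar, x, bb}
         = {alpha, m | abar} {n, beta | bb} - h_{x-1} {alpha, m+n-x+1, beta | abar, bb}.
   Skew Schur functions are computed row by row ([rowsum]); in the product of
   the two parts, the pairs of rows m, n violating column strictness are put
   in weight-preserving bijection, by exchanging their tails after the first
   violating column, with the pairs counted by h_{x-1} {alpha, m+n-x+1, ...}.
   For x = m + 1 or n + 1 the four branches of K are reduced to this by
   merging a neighbouring row of sigma or tau (the recurrence with x = 1). *)

Lemma big_bij_seq (T : Type) (idx : T) (op : Monoid.com_law idx) (I J : eqType)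
    (s : seq I) (t : seq J) (P : pred I) (Q : pred J) (f : I -> T) (g : J -> T)
    (h : I -> J) (h' : J -> I) :
  uniq s -> uniq t ->
  (forall i, i \in s -> P i -> [/\ h i \in t, Q (h i), h' (h i) = i & g (h i) = f i]) ->
  (forall j, j \in t -> Q j -> [/\ h' j \in s, P (h' j) & h (h' j) = j]) ->
  \big[op/idx]_(i <- s | P i) f i = \big[op/idx]_(j <- t | Q j) g j.
Proof.
move=> Us Ut hP h'P; rewrite -big_filter -[RHS]big_filter.
have hperm : perm_eq [seq h i | i <- filter P s] (filter Q t).
  apply: uniq_perm; last 1 first.
  - move=> j; apply/mapP/idP => [[i]|].
      by rewrite mem_filter => /andP [Pi si] ->; case: (hP _ si Pi) => ? ? _ _;
         rewrite mem_filter; apply/andP.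
    rewrite mem_filter => /andP [Qj tj]; case: (h'P _ tj Qj) => ? ? hh'j.
    by exists (h' j); rewrite // mem_filter; apply/andP.
  - rewrite map_inj_in_uniq ?filter_uniq // => i1 i2.
    rewrite !mem_filter => /andP [P1 s1] /andP [P2 s2] e12.
    by case: (hP _ s1 P1) => _ _ <- _; case: (hP _ s2 P2) => _ _ <- _; rewrite e12.
  - exact: filter_uniq.
rewrite -(perm_big _ hperm) big_map; apply: eq_big_seq => i.
by rewrite mem_filter => /andP [Pi si]; case: (hP _ si Pi).
Qed.

Lemma sum_allpairs (R : nmodType) (I J : eqType) (s : seq I) (t : seq J)
    (P : pred I) (Q : I -> J -> bool) (F : I -> J -> R) :
  \sum_(i <- s | P i) \sum_(j <- t | Q i j) F i j =
  \sum_(p <- [seq (i, j) | i <- s, j <- t] | P p.1 && Q p.1 p.2) F p.1 p.2.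
Proof.
rewrite [RHS]big_mkcond big_allpairs [LHS]big_mkcond; apply: eq_bigr => i _.
by case: (P i); [rewrite [LHS]big_mkcond | rewrite big1].
Qed.

Lemma mem_allpairs_pair (I J : eqType) (s : seq I) (t : seq J) (p : I * J) :
  (p \in [seq (i, j) | i <- s, j <- t]) = (p.1 \in s) && (p.2 \in t).
Proof.
apply/allpairsP/andP => [[q [hq1 hq2 ->]]|[hp1 hp2]]; first by split.
by exists p; case: p hp1 hp2.
Qed.

Lemma uniq_allpairs_pair (I J : eqType) (s : seq I) (t : seq J) :
  uniq s -> uniq t -> uniq [seq (i, j) | i <- s, j <- t].
Proof. by move=> Us Ut; apply: allpairs_uniq => // [[? ?] [? ?]]. Qed.

Section FindIota.
Variables (p : pred nat) (y : nat).

Lemma find_iota_lt : has p (iota 0 y) -> (find p (iota 0 y) < y)%N.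
Proof. by rewrite has_find size_iota. Qed.

Lemma find_iota_holds : has p (iota 0 y) -> p (find p (iota 0 y)).
Proof. by move=> hp; have := nth_find 0%N hp; rewrite nth_iota ?find_iota_lt. Qed.

Lemma find_iota_before j : (j < find p (iota 0 y))%N -> ~~ p j.
Proof.
move=> hj; have := before_find 0%N hj; rewrite nth_iota ?add0n => [->//|].
by apply: leq_trans hj _; rewrite -[X in (_ <= X)%N](size_iota 0 y) find_size.
Qed.

Lemma find_iota_eq i : (i < y)%N -> p i -> (forall j, (j < i)%N -> ~~ p j) ->
  find p (iota 0 y) = i.
Proof.
move=> hi pi hb.
have hp : has p (iota 0 y) by apply/hasP; exists i; rewrite ?mem_iota.
case: (ltngtP (find p (iota 0 y)) i) => // hlt; first by have := hb _ hlt; rewrite find_iota_holds.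
by have := find_iota_before hlt; rewrite pi.
Qed.

End FindIota.

Fixpoint valid (a b : seq nat) : bool :=
  match a with
  | a0 :: ((a1 :: _) as a') => (head 0%N b <= minn a0 a1)%N && valid a' (behead b)
  | _ => true
  end.

Lemma valid_cons2 a0 a1 a' b :
  valid [:: a0, a1 & a'] b = (head 0%N b <= minn a0 a1)%N && valid (a1 :: a') (behead b).
Proof. by []. Qed.

Lemma validP a b : reflect (forall i, (i.+1 < size a)%N ->
   (nth 0%N b i <= minn (nth 0%N a i) (nth 0%N a i.+1))%N) (valid a b).
Proof.
elim: a b => [|a0 a' IH] b; first by constructor.
case: a' IH => [|a1 a'] IH; first by constructor.
rewrite valid_cons2; apply: (iffP andP) => [[h0 /IH hs] [|i] hi|h].
- by case: b {hs} h0.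
- by case: b {h0} hs => [|b0 b] /(_ i hi).
split; first by case: b {h} (h 0%N isT).
by apply/IH => i hi; case: b {h} (h i.+1 hi) => [|b0 b] /=; rewrite ?nth_nil.
Qed.

Lemma valid_split (alpha abar : seq nat) u v beta bb y :
  size abar = size alpha ->
  valid (alpha ++ u :: v :: beta) (abar ++ y :: bb) =
  [&& valid (alpha ++ [:: u]) abar, (y <= minn u v)%N & valid (v :: beta) bb].
Proof.
elim: alpha abar => [|a0 alpha IH] [|c0 abar] //= [hs].
by rewrite IH //; case: alpha {IH} hs => [|a1 alpha]; case: abar => [|c1 abar] //= _;
  rewrite ?andbT !andbA.
Qed.

Arguments valid : simpl never.

Lemma valid_last_mono (alpha abar : seq nat) u u' :
  valid (alpha ++ [:: u]) abar -> (u <= u')%N -> valid (alpha ++ [:: u']) abar.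
Proof.
elim: alpha abar => [|a0 alpha IH] abar //.
case: alpha IH => [|a1 alpha] IH; rewrite /= !valid_cons2 => /andP [h1 h2] hu;
  apply/andP; split => //; last exact: IH.
by move: h1; rewrite !leq_min => /andP [-> h1]; apply: leq_trans h1 hu.
Qed.

Lemma valid_first_mono v v' beta bb :
  valid (v :: beta) bb -> (v <= v')%N -> valid (v' :: beta) bb.
Proof.
case: beta => [|b1 beta] //; rewrite !valid_cons2 => /andP [h1 h2] hv.
by apply/andP; split => //; move: h1; rewrite !leq_min => /andP [h1 ->]; rewrite (leq_trans h1 hv).
Qed.

Lemma valid_last (alpha abar : seq nat) u :
  size abar = size alpha -> alpha != [::] ->
  valid (alpha ++ [:: u]) abar -> (last 0%N abar <= u)%N.
Proof.
elim: alpha abar => [|a0 alpha IH] [|c0 abar] //= [hs] _.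
case: alpha IH hs => [|a1 alpha] IH; case: abar => [|c1 abar] //= hs;
  rewrite valid_cons2 => /andP [h1 h2]; last exact: (IH (c1 :: abar)).
by move: h1; rewrite leq_min => /andP [].
Qed.

Lemma valid_head v beta bb : valid (v :: beta) bb -> beta != [::] -> (head 0%N bb <= v)%N.
Proof. by case: beta => [//|b1 beta]; rewrite valid_cons2 leq_min => /andP [/andP []]. Qed.

(* Rows.  A row of a tableau is a word over 'I_N (standing for 1..N); the
   numeric value of its j-th entry is [ent r j] (0 past the end). *)
Section Rows.
Variable N : nat.
Implicit Types (r A B : seq 'I_N).

Definition ent r (j : nat) : nat := nth 0%N (map val r) j.

Definition nondecr r : bool :=
  all (fun j => ent r j <= ent r j.+1)%N (iota 0 (size r).-1).

(* [col_strict c r r']: r lies directly above r' and the first c boxes of r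
   sit above the last c boxes of r'; entries strictly increase down these
   c columns. *)
Definition col_strict (c : nat) r r' : bool :=
  all (fun j => ent r j < ent r' (size r' - c + j))%N (iota 0 c).

Definition words (k : nat) : seq (seq 'I_N) := [seq tval t | t <- enum {: k.-tuple 'I_N}].

Lemma mem_words k r : (r \in words k) = (size r == k).
Proof.
apply/mapP/eqP => [[t _ ->]|hr]; first exact: size_tuple.
have hr' : size r == k by apply/eqP.
by exists (Tuple hr'); rewrite ?mem_enum.
Qed.

Lemma uniq_words k : uniq (words k).
Proof. by rewrite map_inj_uniq ?enum_uniq //; apply: val_inj. Qed.

Lemma ent_cat r1 r2 j :
  ent (r1 ++ r2) j = if (j < size r1)%N then ent r1 j else ent r2 (j - size r1).
Proof. by rewrite /ent map_cat nth_cat size_map. Qed.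

Lemma ent_take k r j : (j < k)%N -> ent (take k r) j = ent r j.
Proof. by move=> hj; rewrite /ent map_take nth_take. Qed.

Lemma ent_drop k r j : ent (drop k r) j = ent r (k + j).
Proof. by rewrite /ent map_drop nth_drop. Qed.

Lemma nondecrP r :
  reflect (forall j, (j.+1 < size r)%N -> (ent r j <= ent r j.+1)%N) (nondecr r).
Proof.
apply: (iffP allP) => h j; first by move=> hj; apply: h; rewrite mem_iota; lia.
by rewrite mem_iota => /andP [_ hj]; apply: h; lia.
Qed.

Lemma nondecr_mono r j k :
  nondecr r -> (j <= k)%N -> (k < size r)%N -> (ent r j <= ent r k)%N.
Proof.
move=> /nondecrP h; elim: k => [|k IH]; first by rewrite leqn0 => /eqP ->.
rewrite leq_eqVlt => /orP [/eqP -> //|hjk hk].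
by apply: leq_trans (IH _ _) (h _ hk); lia.
Qed.

Lemma nondecr_cat r1 r2 : nondecr r1 -> nondecr r2 ->
  ((0 < size r1)%N -> (0 < size r2)%N -> ent r1 (size r1).-1 <= ent r2 0)%N ->
  nondecr (r1 ++ r2).
Proof.
move=> h1 h2 h12; apply/nondecrP => j; rewrite size_cat => hj; rewrite !ent_cat.
case: (ltnP j.+1 (size r1)) => hj1.
  by rewrite (ltnW hj1); apply: nondecr_mono h1 _ _.
case: (ltnP j (size r1)) => hj0.
  have -> : j = (size r1).-1 by lia.
  by rewrite (_ : (size r1).-1.+1 - size r1 = 0)%N; [apply: h12|]; lia.
rewrite (_ : j.+1 - size r1 = (j - size r1).+1)%N; last lia.
by apply: nondecr_mono h2 _ _ => //; lia.
Qed.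

(* [splice k B i A]: the first k entries of B followed by A without its first
   i entries.  Swapping tails of two rows produces such words. *)
Definition splice k B i A : seq 'I_N := take k B ++ drop i A.

Lemma size_splice k B i A : (k <= size B)%N -> size (splice k B i A) = (k + (size A - i))%N.
Proof. by move=> hk; rewrite size_cat size_takel // size_drop. Qed.

Lemma ent_splice k B i A j : (k <= size B)%N ->
  ent (splice k B i A) j = if (j < k)%N then ent B j else ent A (i + (j - k)).
Proof.
by move=> hk; rewrite ent_cat size_takel //; case: ifP => hj; rewrite ?ent_take ?ent_drop.
Qed.

Lemma nondecr_splice k B i A : (k <= size B)%N -> nondecr B -> nondecr A ->
  ((0 < k)%N -> (i < size A)%N -> (ent B k.-1 <= ent A i)%N) ->
  nondecr (splice k B i A).
Proof.
move=> hk hB hA hj; apply: nondecr_cat.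
- apply/nondecrP => j; rewrite size_take => hj1; rewrite !ent_take;
    try (case: ifP hj1 => ? ?; lia).
  by apply: nondecr_mono hB _ _ => //; case: ifP hj1 => ? ?; lia.
- by apply/nondecrP => j; rewrite size_drop !ent_drop => hj1; apply: nondecr_mono hA _ _; lia.
rewrite size_takel // size_drop => h1 h2; rewrite ent_take ?ent_drop ?addn0; last lia.
by apply: hj; lia.
Qed.

Lemma take_splice k B s : (k <= size B)%N -> take k (take k B ++ s) = take k B.
Proof. by move=> hk; rewrite take_cat size_takel // ltnn subnn take0 cats0. Qed.

Lemma drop_splice_head k B s : (k <= size B)%N -> drop k (take k B ++ s) = s.
Proof. by move=> hk; rewrite drop_cat size_takel // ltnn subnn drop0. Qed.

Lemma drop_splice d k B i A : (k <= size B)%N -> (k <= d)%N ->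
  drop d (splice k B i A) = drop (d - k + i) A.
Proof. by move=> h1 h2; rewrite drop_cat size_takel // ltnNge h2 /= drop_drop. Qed.

Lemma col_strict_prefix c r1 r2 r' :
  (forall j, (j < c)%N -> ent r1 j = ent r2 j) -> col_strict c r1 r' = col_strict c r2 r'.
Proof. by move=> h; apply: eq_in_all => j; rewrite mem_iota => /andP [_ hj]; rewrite h. Qed.

Lemma col_strict_drop c k r r' :
  (k + c <= size r')%N -> col_strict c r (drop k r') = col_strict c r r'.
Proof.
move=> h; apply: eq_in_all => j _ /=; rewrite ent_drop size_drop.
by rewrite (_ : k + (size r' - k - c + j) = size r' - c + j)%N; last lia.
Qed.

Section Weights.
Variables (R : comPzRingType) (xv : 'I_N -> R).

Definition wt r : R := \prod_(i <- r) xv i.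

Lemma wt_cat r1 r2 : wt (r1 ++ r2) = wt r1 * wt r2.
Proof. by rewrite /wt big_cat. Qed.

Lemma wt_splice_swap A B k i :
  wt (splice k B i A) * wt (splice i A k B) = wt A * wt B.
Proof.
rewrite /splice -{3}(cat_take_drop i A) -{3}(cat_take_drop k B) !wt_cat.
by rewrite mulrACA [RHS]mulrACA (mulrC (wt (take i A))).
Qed.

(* [rowsum a b P]: the generating function of fillings of the skew diagram
   (a | b), computed row by row from the top: each row is a weakly increasing
   word, consecutive rows are column strict, and the top row satisfies P. *)
Fixpoint rowsum (a b : seq nat) (P : pred (seq 'I_N)) : R :=
  match a with
  | [::] => 1
  | a0 :: a' => \sum_(r <- words a0 | nondecr r && P r)
                   wt r * rowsum a' (behead b) (col_strict (head 0%N b) r)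
  end.

(* the complete homogeneous symmetric function h_k, and h_{x-1} (h_{-1} = 0) *)
Definition hsym (k : nat) : R := rowsum [:: k] [::] predT.
Definition hsym_pred (x : nat) : R := if x is k.+1 then hsym k else 0.

Lemma rowsum_cons a0 a' b P : rowsum (a0 :: a') b P =
  \sum_(r <- words a0 | nondecr r && P r) wt r * rowsum a' (behead b) (col_strict (head 0%N b) r).
Proof. by []. Qed.

Lemma eq_rowsum a0 a' b P P' : (forall r, size r = a0 -> P r = P' r) ->
  rowsum (a0 :: a') b P = rowsum (a0 :: a') b P'.
Proof.
move=> h; rewrite !rowsum_cons -!(big_filter (words a0)).
congr (\big[_/_]_(i <- _) _); apply: eq_in_filter => r.
by rewrite mem_words => /eqP hr; rewrite h.
Qed.

Lemma hsym0 : hsym 0 = 1.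
Proof.
have e : perm_eq (words 0) [:: [::]].
  by apply: uniq_perm => [|//|r]; rewrite ?uniq_words // mem_words mem_seq1 size_eq0.
by rewrite /hsym rowsum_cons (perm_big _ e) big_cons big_nil /= mulr1 addr0 /wt big_nil.
Qed.

End Weights.
End Rows.

Arguments rowsum : simpl never.

(* Fix two rows A (length m, on top) and B (length n, below)
   overlapping in x columns.  If they violate column strictness, let i be the
   first violating overlap column; exchanging the tails of A and B after that
   column yields a row C of length m + n - x + 1 and a row D of length x - 1.
   This is a weight-preserving bijection between violating pairs (A, B) of
   weakly increasing rows and pairs (C, D) of weakly increasing rows; the
   inverse locates i as the first column where C and D can be cut. *)
Section TailSwap.
Variables (R : comPzRingType) (N m n x : nat) (xv : 'I_N -> R).
Hypotheses (x_gt0 : (0 < x)%N) (x_le_m : (x <= m)%N) (x_le_n : (x <= n)%N).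
Implicit Types (A B C D : seq 'I_N).

Definition viol A B j : bool := (ent B (n - x + j) <= ent A j)%N.
Definition first_viol A B : nat := find (viol A B) (iota 0 x).

(* C and D can be cut at j (the last column always qualifies) *)
Definition cut C D j : bool := (j == x.-1) || (ent C (n - x + j) <= ent D j)%N.
Definition first_cut C D : nat := find (cut C D) (iota 0 x).

Definition swap_tails (p : seq 'I_N * seq 'I_N) : seq 'I_N * seq 'I_N :=
  let i := first_viol p.1 p.2 in
  (splice (n - x + i).+1 p.2 i p.1, splice i p.1 (n - x + i).+1 p.2).

Definition unswap_tails (q : seq 'I_N * seq 'I_N) : seq 'I_N * seq 'I_N :=
  let i := first_cut q.1 q.2 in
  (splice i q.2 (n - x + i).+1 q.1, splice (n - x + i).+1 q.1 i q.2).

Lemma not_col_strict A B : size B = n -> ~~ col_strict x A B = has (viol A B) (iota 0 x).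
Proof. by move=> hB; rewrite -has_predC; apply: eq_has => j /=; rewrite /viol hB -leqNgt. Qed.

Lemma first_cut_swap A B i : size A = m -> size B = n -> nondecr B -> (i < x)%N ->
  (forall j, (j < i)%N -> ~~ viol A B j) ->
  first_cut (splice (n - x + i).+1 B i A) (splice i A (n - x + i).+1 B) = i.
Proof.
move=> sA sB iB hi hbefore.
have hk : ((n - x + i).+1 <= size B)%N by rewrite sB; lia.
have hiA : (i <= size A)%N by rewrite sA; lia.
apply: find_iota_eq => // [|j hj].
  rewrite /cut; case: eqP => //= hne; rewrite !ent_splice // ltnn ltnSn subnn addn0.
  by apply: nondecr_mono iB _ _ => //; rewrite sB; lia.
rewrite /cut negb_or (_ : (j == x.-1) = false) /=; last by apply/eqP; lia.
rewrite !ent_splice // hj (_ : (n - x + j < (n - x + i).+1)%N); last lia.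
exact: hbefore.
Qed.

Lemma first_viol_unswap C D i : size C = (m + n - x).+1 -> size D = x.-1 ->
  nondecr C -> (i < x)%N -> (forall j, (j < i)%N -> ~~ cut C D j) ->
  first_viol (splice i D (n - x + i).+1 C) (splice (n - x + i).+1 C i D) = i.
Proof.
move=> sC sD iC hi hbefore.
have hk : ((n - x + i).+1 <= size C)%N by rewrite sC; lia.
have hiD : (i <= size D)%N by rewrite sD; lia.
apply: find_iota_eq => // [|j hj].
  rewrite /viol !ent_splice // ltnn ltnSn subnn addn0.
  by apply: nondecr_mono iC _ _ => //; rewrite sC; lia.
move: (hbefore j hj); rewrite /cut /viol negb_or => /andP [_].
by rewrite !ent_splice // hj (_ : (n - x + j < (n - x + i).+1)%N) //; lia.
Qed.

Lemma swap_tailsP A B C D : size A = m -> size B = n -> nondecr A -> nondecr B ->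
  has (viol A B) (iota 0 x) -> swap_tails (A, B) = (C, D) ->
  [/\ size C = (m + n - x).+1, size D = x.-1, nondecr C, nondecr D &
   [/\ drop n C = drop x.-1 A, unswap_tails (C, D) = (A, B),
       (forall j, (j < (n - x).+1)%N -> ent C j = ent B j) &
       wt xv C * wt xv D = wt xv A * wt xv B]].
Proof.
move=> sA sB iA iB hv; rewrite /swap_tails /=; set i := first_viol A B; case=> <- <-.
have hi : (i < x)%N by apply: find_iota_lt.
have hbefore : forall j, (j < i)%N -> ~~ viol A B j by move=> j; apply: find_iota_before.
have hbefore' : forall j, (j < i)%N -> (ent A j < ent B (n - x + j))%N.
  by move=> j /hbefore; rewrite /viol -ltnNge.
have hk : ((n - x + i).+1 <= size B)%N by rewrite sB; lia.
have hiA : (i <= size A)%N by rewrite sA; lia.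
split.
- by rewrite size_splice // sA; lia.
- by rewrite size_splice // sB; lia.
- by apply: nondecr_splice => // _ _; apply: (find_iota_holds hv).
- apply: nondecr_splice => // i_gt0 hlen; apply: ltnW (leq_trans (hbefore' i.-1 _) _); first lia.
  by apply: nondecr_mono iB _ _ => //; lia.
split.
- by rewrite drop_splice //; [congr drop; lia | lia].
- rewrite /unswap_tails /= first_cut_swap // /splice.
  by rewrite take_splice // drop_splice_head // take_splice // drop_splice_head // !cat_take_drop.
- by move=> j hj; rewrite ent_splice // (_ : (j < (n - x + i).+1)%N) //; lia.
- exact: wt_splice_swap.
Qed.

Lemma unswap_tailsP C D A B : size C = (m + n - x).+1 -> size D = x.-1 ->
  nondecr C -> nondecr D -> unswap_tails (C, D) = (A, B) ->
  [/\ size A = m, size B = n, nondecr A, nondecr B &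
   [/\ drop x.-1 A = drop n C, has (viol A B) (iota 0 x) & swap_tails (A, B) = (C, D)]].
Proof.
move=> sC sD iC iD; rewrite /unswap_tails /=; set i := first_cut C D; case=> <- <-.
have hc : has (cut C D) (iota 0 x).
  by apply/hasP; exists x.-1; rewrite ?mem_iota /cut ?eqxx //; lia.
have hi : (i < x)%N by apply: find_iota_lt.
have hcut : cut C D i by apply: find_iota_holds.
have hbefore : forall j, (j < i)%N -> ~~ cut C D j by move=> j; apply: find_iota_before.
have hbefore' : forall j, (j < i)%N -> (ent D j < ent C (n - x + j))%N.
  by move=> j /hbefore; rewrite /cut negb_or -ltnNge => /andP [].
have hk : ((n - x + i).+1 <= size C)%N by rewrite sC; lia.
have hiD : (i <= size D)%N by rewrite sD; lia.
have hviol := first_viol_unswap sC sD iC hi hbefore.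
split.
- by rewrite size_splice // sC; lia.
- by rewrite size_splice // sD; lia.
- apply: nondecr_splice => // i_gt0 hlen; apply: ltnW (leq_trans (hbefore' i.-1 _) _); first lia.
  by apply: nondecr_mono iC _ _ => //; lia.
- apply: nondecr_splice => // _ hiD'; move: hcut; rewrite /cut.
  by case: eqP => [ei|_ //]; rewrite sD in hiD'; lia.
split.
- by rewrite drop_splice //; [congr drop; lia | lia].
- by move: hviol; rewrite /first_viol has_find size_iota => ->.
- rewrite /swap_tails /= hviol /splice.
  by rewrite take_splice // drop_splice_head // take_splice // drop_splice_head // !cat_take_drop.
Qed.

End TailSwap.

Section Recurrence.
Variables (R : comPzRingType) (N : nat) (xv : 'I_N -> R).
Local Notation rowsum := (rowsum xv).
Local Notation wt := (wt xv).
Local Notation hsym := (hsym xv).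
Local Notation hsym_pred := (hsym_pred xv).

Lemma rowsum_below_prefix beta bb c (B B' : seq 'I_N) :
  (beta != [::] -> (head 0%N bb <= c)%N) -> (forall j, (j < c)%N -> ent B j = ent B' j) ->
  rowsum beta (behead bb) (col_strict (head 0%N bb) B) =
  rowsum beta (behead bb) (col_strict (head 0%N bb) B').
Proof.
case: beta => [//|b0 beta] hc hBB' /=; apply: eq_rowsum => r _.
by apply: col_strict_prefix => j hj; apply: hBB'; apply: leq_trans hj (hc _).
Qed.

(* The tail swap at work: the pairs of rows m (on top, constrained beyond its
   first x - 1 boxes) and n that violate column strictness in their x > 0
   overlapping columns contribute h_{x-1} times the diagram with rows m and n
   merged into a row of length m + n - x + 1. *)
Lemma sum_violating_pairs m n x beta bb (Q : pred (seq 'I_N)) :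
  (0 < x)%N -> (x <= m)%N -> (x <= n)%N ->
  (beta != [::] -> (head 0%N bb <= (n - x).+1)%N) ->
  \sum_(A <- words N m | nondecr A && Q (drop x.-1 A)) wt A *
     \sum_(B <- words N n | nondecr B && ~~ col_strict x A B)
        wt B * rowsum beta (behead bb) (col_strict (head 0%N bb) B) =
  hsym x.-1 * rowsum ((m + n - x).+1 :: beta) bb (fun r => Q (drop n r)).
Proof.
move=> x_gt0 x_le_m x_le_n hbb.
rewrite /hsym !rowsum_cons mulrC mulr_suml.
under eq_bigr => A _ do rewrite mulr_sumr.
under [RHS]eq_bigr => C _ do rewrite mulr_sumr.
rewrite !sum_allpairs; apply: (big_bij_seq _ _ (h := swap_tails n x) (h' := unswap_tails n x)).
- by apply: uniq_allpairs_pair; apply: uniq_words.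
- by apply: uniq_allpairs_pair; apply: uniq_words.
- move=> [A B]; case hCD : (swap_tails n x (A, B)) => [C D].
  rewrite mem_allpairs_pair !mem_words /= => /andP [/eqP sA /eqP sB].
  move=> /andP [/andP [iA QA] /andP [iB]]; rewrite (@not_col_strict N n x A B sB) => hv.
  have [sC sD iC iD [dC hun hpre hwt]] := swap_tailsP xv x_gt0 x_le_m x_le_n sA sB iA iB hv hCD.
  split => //; first by rewrite mem_allpairs_pair !mem_words /= sC sD !eqxx.
    by rewrite /= iC iD dC QA.
  rewrite (_ : rowsum [::] _ _ = 1) // mulr1 mulrAC hwt -mulrA.
  by congr (_ * (_ * _)); apply: rowsum_below_prefix hbb _ => j /hpre.
- move=> [C D]; case hAB : (unswap_tails n x (C, D)) => [A B].
  rewrite mem_allpairs_pair !mem_words /= => /andP [/eqP sC /eqP sD].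
  move=> /andP [/andP [iC QC] /andP [iD _]].
  have [sA sB iA iB [dA hv hsw]] := unswap_tailsP x_gt0 x_le_m x_le_n sC sD iC iD hAB.
  split => //; first by rewrite mem_allpairs_pair !mem_words /= sA sB !eqxx.
  by rewrite /= iA iB dA QC (@not_col_strict N n x A B sB).
Qed.

(* The recurrence for the top two rows m, n overlapping in x > 0 columns:
   expanding the product of the two separate parts overcounts exactly by the
   violating pairs. *)
Lemma rowsum_top_two m n x beta bb (Q : pred (seq 'I_N)) :
  (0 < x)%N -> (x <= m)%N -> (x <= n)%N ->
  (beta != [::] -> (head 0%N bb <= (n - x).+1)%N) ->
  rowsum (m :: n :: beta) (x :: bb) (fun r => Q (drop x.-1 r)) =
  rowsum [:: m] [::] (fun r => Q (drop x.-1 r)) * rowsum (n :: beta) bb predT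
  - hsym x.-1 * rowsum ((m + n - x).+1 :: beta) bb (fun r => Q (drop n r)).
Proof.
move=> x_gt0 x_le_m x_le_n hbb; rewrite -sum_violating_pairs // !rowsum_cons.
rewrite mulr_suml -sumrB; apply: eq_bigr => A _.
rewrite rowsum_cons (_ : rowsum [::] _ _ = 1) // mulr1 -mulrBr; congr (_ * _).
under [X in _ = X - _]eq_bigl => B do rewrite andbT.
by rewrite [X in _ = X - _](bigID (col_strict x A)) addrK.
Qed.

(* The same for any overlap 0 <= x <= min(m, n); for x = 0 the two parts are
   independent and h_{-1} = 0. *)
Lemma rowsum_top_pair m n x beta bb (Q : pred (seq 'I_N)) :
  (x <= minn m n)%N -> (beta != [::] -> (head 0%N bb <= n - x.-1)%N) ->
  rowsum (m :: n :: beta) (x :: bb) (fun r => Q (drop x.-1 r)) =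
  rowsum [:: m] [::] (fun r => Q (drop x.-1 r)) * rowsum (n :: beta) bb predT
  - hsym_pred x * rowsum ((m + n - x).+1 :: beta) bb (fun r => Q (drop n r)).
Proof.
case: x => [|x] hx hbb.
  rewrite mul0r subr0 !rowsum_cons mulr_suml; apply: eq_bigr => A _.
  by rewrite (_ : rowsum [::] _ _ = 1) // mulr1; congr (_ * _); apply: eq_rowsum.
by apply: rowsum_top_two => // [||/hbb]; lia.
Qed.

Lemma sum_lincomb (I : Type) (s : seq I) (P : pred I) (w X Z : I -> R) (Y h : R) :
  \sum_(i <- s | P i) w i * (X i * Y - h * Z i) =
  (\sum_(i <- s | P i) w i * X i) * Y - h * \sum_(i <- s | P i) w i * Z i.
Proof.
rewrite mulr_suml mulr_sumr -sumrB; apply: eq_bigr => i _.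
by rewrite mulrBr !mulrA [w i * h]mulrC.
Qed.

(* The recurrence below a nonempty block of rows a0 :: alpha; the row just
   above m overlaps it in at most m - x + 1 columns, so it only sees the part
   of row m that the two-row step keeps. *)
Lemma rowsum_recurrence_below alpha abar m n x beta bb :
  size abar = size alpha -> (x <= minn m n)%N ->
  (beta != [::] -> (head 0%N bb <= n - x.-1)%N) ->
  forall a0 c0 (P : pred (seq 'I_N)), (last c0 abar <= m - x.-1)%N ->
  rowsum (a0 :: alpha ++ m :: n :: beta) (c0 :: abar ++ x :: bb) P =
  rowsum (a0 :: alpha ++ [:: m]) (c0 :: abar) P * rowsum (n :: beta) bb predT
  - hsym_pred x * rowsum (a0 :: alpha ++ (m + n - x).+1 :: beta) (c0 :: abar ++ bb) P.
Proof.
move=> hs hx hbb; elim: alpha abar hs => [|a1 alpha IH] [|c1 abar] //= hs a0 c0 P hc;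
  rewrite !(rowsum_cons xv a0) /= -sum_lincomb; apply: eq_bigr => r _; congr (_ * _);
  last by case: hs => hs; apply: IH.
have drop_top k a' b' : (k + c0 <= m)%N ->
    rowsum (m :: a') b' (col_strict c0 r) = rowsum (m :: a') b' (fun A => col_strict c0 r (drop k A)).
  by move=> hk; apply: eq_rowsum => A sA; rewrite col_strict_drop // sA.
rewrite !(drop_top x.-1); try lia.
rewrite rowsum_top_pair //; congr (_ * _ - _ * _); apply: eq_rowsum => A sA;
  rewrite col_strict_drop // sA; lia.
Qed.

Lemma rowsum_recurrence alpha abar m n x beta bb :
  size abar = size alpha -> (x <= minn m n)%N ->
  valid (alpha ++ [:: (m - x.-1)%N]) abar -> valid ((n - x.-1)%N :: beta) bb ->
  rowsum (alpha ++ m :: n :: beta) (abar ++ x :: bb) predT =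
  rowsum (alpha ++ [:: m]) abar predT * rowsum (n :: beta) bb predT
  - hsym_pred x * rowsum (alpha ++ (m + n - x).+1 :: beta) (abar ++ bb) predT.
Proof.
move=> hs hx vtop vbot; have hbb := valid_head vbot.
case: alpha abar hs vtop => [|a0 alpha] [|c0 abar] //= hs vtop.
  exact: (rowsum_top_pair predT hx hbb).
case: hs => hs; apply: rowsum_recurrence_below => //.
have := @valid_last (a0 :: alpha) (c0 :: abar) (m - x.-1)%N.
by apply=> //=; rewrite hs.
Qed.

Lemma rowsum_overlap1 alpha abar u v beta bb :
  size abar = size alpha -> (0 < u)%N -> (0 < v)%N ->
  valid (alpha ++ [:: u]) abar -> valid (v :: beta) bb ->
  rowsum (alpha ++ [:: u, v & beta]) (abar ++ 1%N :: bb) predT =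
  rowsum (alpha ++ [:: u]) abar predT * rowsum (v :: beta) bb predT
  - rowsum (alpha ++ (u + v)%N :: beta) (abar ++ bb) predT.
Proof.
move=> hs u_gt0 v_gt0 vtop vbot.
rewrite rowsum_recurrence ?subn0 //; last by rewrite leq_min u_gt0 v_gt0.
by rewrite /hsym_pred hsym0 mul1r (_ : (u + v - 1).+1 = u + v)%N; last lia.
Qed.

End Recurrence.

Lemma starts_rec a b i : (i.+1 < size a)%N ->
  nth 0%N (starts a b) i = (nth 0%N (starts a b) i.+1 + nth 0%N a i.+1 - nth 0%N b i)%N.
Proof.
elim: a b i => [|a0 a' IH] b i //=; case: a' IH => [|a1 a'] IH //=.
by case: i => [|i] hi /=; rewrite ?nth0 // IH // nth_behead.
Qed.

Lemma nth_le_sumn (s : seq nat) i : (nth 0%N s i <= sumn s)%N.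
Proof. by elim: s i => [|y s IH] [|i] //=; [apply: leq_addr | apply: leq_trans (IH i) (leq_addl _ _)]. Qed.

Section Starts.
Variables (a b : seq nat).
Hypothesis ab_valid : valid a b.
Local Notation st i := (nth 0%N (starts a b) i).
Local Notation aa i := (nth 0%N a i).
Local Notation bb i := (nth 0%N b i).

Lemma overlap_le i : (i.+1 < size a)%N -> (bb i <= aa i)%N /\ (bb i <= aa i.+1)%N.
Proof. by move=> hi; move/validP: ab_valid => /(_ i hi); rewrite leq_min => /andP []. Qed.

Lemma st_step i : (i.+1 < size a)%N -> (st i + bb i = st i.+1 + aa i.+1)%N.
Proof. by move=> hi; have [_ h2] := overlap_le hi; rewrite (starts_rec b hi); lia. Qed.

Lemma st_mono i k : (i <= k)%N -> (k < size a)%N -> (st k <= st i)%N.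
Proof.
elim: k => [|k IH]; first by rewrite leqn0 => /eqP ->.
rewrite leq_eqVlt => /orP [/eqP -> //|hik] hk.
by have := st_step hk; have [_ ?] := overlap_le hk; have := IH hik (ltnW hk); lia.
Qed.

Lemma end_mono i k : (i <= k)%N -> (k < size a)%N -> (st k + aa k <= st i + aa i)%N.
Proof.
elim: k => [|k IH]; first by rewrite leqn0 => /eqP ->.
rewrite leq_eqVlt => /orP [/eqP -> //|hik] hk.
by have := st_step hk; have [? _] := overlap_le hk; have := IH hik (ltnW hk); lia.
Qed.

End Starts.

Lemma st_width a b i : (nth 0%N (starts a b) i + nth 0%N a i <= width a b)%N.
Proof. by apply: leq_add; apply: nth_le_sumn. Qed.

Section Boxes.
Variables (a b : seq nat).
Local Notation st i := (nth 0%N (starts a b) i).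
Local Notation aa i := (nth 0%N a i).

Definition mkbox (i c : nat) : option (box a b) :=
  if (insub i : option 'I_(size a)) is Some i' then
    if (insub c : option 'I_(width a b)) is Some c' then insub (i', c') else None
  else None.

Lemma mkboxE (u : box a b) : mkbox (brow u) (bcol u) = Some u.
Proof. by case: u => [[i c] hu]; rewrite /mkbox /brow /bcol /= !valK (insubT _ hu). Qed.

Lemma box_range (u : box a b) :
  [/\ (brow u < size a)%N, (st (brow u) <= bcol u)%N & (bcol u < st (brow u) + aa (brow u))%N].
Proof.
case: u => [[i c] hu]; rewrite /brow /bcol /=.
by move: hu; rewrite /in_diag /= => /andP [h1 h2]; split.
Qed.

Lemma mkbox_some i c : (i < size a)%N -> (st i <= c)%N -> (c < st i + aa i)%N ->
  exists u : box a b, [/\ mkbox i c = Some u, brow u = i & bcol u = c].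
Proof.
move=> hi h1 h2; have hc : (c < width a b)%N := leq_trans h2 (st_width a b i).
have hd : in_diag a b (Ordinal hi, Ordinal hc) by rewrite /in_diag /= h1 h2.
pose u : box a b := exist (fun p => in_diag a b p) _ hd.
by exists u; split => //; apply: (mkboxE u).
Qed.

Lemma box_inj (u v : box a b) : brow u = brow v -> bcol u = bcol v -> u = v.
Proof. by move=> e1 e2; have := mkboxE u; rewrite e1 e2 mkboxE => [[]]. Qed.

End Boxes.

Section Fillings.
Variables (R : comPzRingType) (N : nat) (xv : 'I_N -> R).

Fixpoint row_lists (a : seq nat) : seq (seq (seq 'I_N)) :=
  if a is a0 :: a' then [seq r :: Rs | r <- words N a0, Rs <- row_lists a'] else [:: [::]].

Lemma mem_row_lists a Rs : (Rs \in row_lists a) = (map size Rs == a).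
Proof.
elim: a Rs => [|a0 a' IH] Rs; first by case: Rs.
apply/allpairsP/idP => [[[r Rs'] [/= h1 h2 ->]]|].
  by move: h1 h2; rewrite mem_words IH /= => /eqP -> /eqP ->.
case: Rs => [//|r Rs'] /= /eqP [hr hRs]; exists (r, Rs').
by rewrite /= mem_words IH hr hRs.
Qed.

Lemma uniq_row_lists a : uniq (row_lists a).
Proof.
elim: a => [|a0 a' IH] //=; apply: allpairs_uniq => //; first exact: uniq_words.
by move=> [r1 R1] [r2 R2] _ _ /= [-> ->].
Qed.

Fixpoint rows_ok (b : seq nat) (Rs : seq (seq 'I_N)) : bool :=
  match Rs with
  | [::] => true
  | r :: Rs' => [&& nondecr r, (if Rs' is r' :: _ then col_strict (head 0%N b) r r' else true)
                 & rows_ok (behead b) Rs']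
  end.

Lemma rows_okP (b : seq nat) (Rs : seq (seq 'I_N)) : reflect
  ((forall i, (i < size Rs)%N -> nondecr (nth [::] Rs i)) /\
   (forall i, (i.+1 < size Rs)%N -> col_strict (nth 0%N b i) (nth [::] Rs i) (nth [::] Rs i.+1)))
  (rows_ok b Rs).
Proof.
elim: Rs b => [|r Rs IH] b /=; first by constructor; split.
apply: (iffP and3P) => [[ir hc /IH [h1 h2]]|[h1 h2]].
  split => [[|i] hi //|[|i] hi /=]; first exact: h1.
    by case: Rs {IH h1 h2} hc hi => [//|r' Rs] /=; rewrite nth0.
  by rewrite -nth_behead; apply: h2.
split; first exact: (h1 0%N).
  by case: Rs {IH h1} h2 => [//|r' Rs] h2; rewrite -nth0; apply: (h2 0%N).
by apply/IH; split => [i hi|i hi]; [apply: (h1 i.+1) | rewrite nth_behead; apply: (h2 i.+1)].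
Qed.

Definition wt_rows (Rs : seq (seq 'I_N)) : R := \prod_(r <- Rs) wt xv r.

Lemma rowsum_flat a b : rowsum xv a b predT = \sum_(Rs <- row_lists a | rows_ok b Rs) wt_rows Rs.
Proof.
suff gen : forall P, rowsum xv a b P =
    \sum_(Rs <- row_lists a | rows_ok b Rs && (if Rs is r :: _ then P r else true)) wt_rows Rs.
  by rewrite gen; apply: eq_bigl => -[|r Rs]; rewrite andbT.
elim: a b => [|a0 a' IH] b P; first by rewrite /= big_cons big_nil /= addr0 /wt_rows big_nil.
rewrite rowsum_cons [RHS]big_mkcond /= big_allpairs_dep [LHS]big_mkcond.
apply: eq_bigr => r _; rewrite IH; case: (boolP (nondecr r && P r)) => [/andP [ir pr]|hr].
  rewrite mulr_sumr [LHS]big_mkcond; apply: eq_bigr => Rs' _ /=.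
  by rewrite ir pr andbT /= andbC /wt_rows big_cons.
rewrite big1 // => Rs' _ /=.
by move: hr; rewrite negb_and => /orP [] /negbTE ->; rewrite ?andbF.
Qed.

End Fillings.

(* Semistandard tableaux of shape (a | b) correspond to their lists of rows;
   d is a default entry used for reading off-diagram positions. *)
Section Tableaux.
Variables (R : comPzRingType) (N : nat) (xv : 'I_N -> R) (d : 'I_N) (a b : seq nat).
Hypothesis ab_valid : valid a b.
Local Notation st i := (nth 0%N (starts a b) i).
Local Notation aa i := (nth 0%N a i).
Local Notation bb i := (nth 0%N b i).
Local Notation tableau := {ffun box a b -> 'I_N}.

Definition val_at (T : tableau) i c : 'I_N := odflt d (omap T (mkbox a b i c)).

Lemma val_at_inside T i c : (i < size a)%N -> (st i <= c)%N -> (c < st i + aa i)%N ->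
  exists u : box a b, [/\ val_at T i c = T u, brow u = i & bcol u = c].
Proof. by move=> hi h1 h2; have [u [eu ru cu]] := mkbox_some hi h1 h2; exists u; rewrite /val_at eu. Qed.

Definition rows_of (T : tableau) : seq (seq 'I_N) :=
  [seq [seq val_at T i c | c <- iota (st i) (aa i)] | i <- iota 0 (size a)].

Definition tableau_of (Rs : seq (seq 'I_N)) : tableau :=
  [ffun u => nth d (nth [::] Rs (brow u)) (bcol u - st (brow u))].

Lemma nth_rows_of T i : (i < size a)%N ->
  nth [::] (rows_of T) i = [seq val_at T i c | c <- iota (st i) (aa i)].
Proof. by move=> hi; rewrite (nth_map 0%N) ?size_iota // nth_iota. Qed.

Lemma size_rows_of T : size (rows_of T) = size a.
Proof. by rewrite size_map size_iota. Qed.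

Lemma map_size_rows_of T : map size (rows_of T) = a.
Proof.
apply: (@eq_from_nth _ 0%N) => [|i]; rewrite size_map size_rows_of // => hi.
by rewrite (nth_map [::]) ?size_rows_of // nth_rows_of // size_map size_iota.
Qed.

Lemma ent_rows_of T i j : (i < size a)%N -> (j < aa i)%N ->
  ent (nth [::] (rows_of T) i) j = val (val_at T i (st i + j)).
Proof.
by move=> hi hj; rewrite /ent nth_rows_of // -map_comp (nth_map 0%N) ?size_iota // nth_iota.
Qed.

Lemma tableau_of_rows_of T : tableau_of (rows_of T) = T.
Proof.
apply/ffunP => u; rewrite ffunE; have [hi h1 h2] := box_range u.
rewrite nth_rows_of // (nth_map 0%N) ?size_iota; last lia.
by rewrite nth_iota ?subnKC /val_at ?mkboxE //; lia.
Qed.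

Lemma rows_of_tableau_of Rs : map size Rs = a -> rows_of (tableau_of Rs) = Rs.
Proof.
move=> hRs; have hs : size Rs = size a by rewrite -hRs size_map.
apply: (@eq_from_nth _ [::]) => [|i]; rewrite size_rows_of ?hs // => hi.
have hsi : size (nth [::] Rs i) = aa i by rewrite -hRs (nth_map [::]) ?hs.
rewrite nth_rows_of //; apply: (@eq_from_nth _ d) => [|j]; rewrite size_map size_iota ?hsi // => hj.
rewrite (nth_map 0%N) ?size_iota // nth_iota //.
have [u [eu ru cu]] := val_at_inside (tableau_of Rs) hi (leq_addr j _) ltac:(lia).
by rewrite eu ffunE ru cu addKn.
Qed.

Lemma ent_nth (r : seq 'I_N) j : (j < size r)%N -> ent r j = val (nth d r j).
Proof. by move=> hj; rewrite /ent (nth_map d). Qed.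

Lemma ssyt_row (T : tableau) (u v : box a b) : is_ssyt T ->
  brow u = brow v -> (bcol u < bcol v)%N -> (T u <= T v)%N.
Proof. by move=> /forallP /(_ u) /forallP /(_ v) /andP [/implyP h _] e hc; apply: h; rewrite e eqxx. Qed.

Lemma ssyt_col (T : tableau) (u v : box a b) : is_ssyt T ->
  bcol u = bcol v -> (brow u < brow v)%N -> (T u < T v)%N.
Proof. by move=> /forallP /(_ u) /forallP /(_ v) /andP [_ /implyP h] e hr; apply: h; rewrite e eqxx. Qed.

Lemma ssyt_rows_ok (T : tableau) : is_ssyt T -> rows_ok b (rows_of T).
Proof.
move=> hT; apply/rows_okP; rewrite size_rows_of; split => [i hi|i hi].
  have hsz : size (nth [::] (rows_of T) i) = aa i by rewrite nth_rows_of // size_map size_iota.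
  apply/nondecrP => j; rewrite hsz => hj; rewrite !ent_rows_of //; try lia.
  have [u [eu ru cu]] := @val_at_inside T i (st i + j) hi (leq_addr _ _) ltac:(lia).
  have [v [ev rv cv]] := @val_at_inside T i (st i + j.+1) hi (leq_addr _ _) ltac:(lia).
  by rewrite eu ev; apply: ssyt_row; rewrite ?ru ?rv ?cu ?cv //; lia.
have [hb1 hb2] := overlap_le ab_valid hi; have hst := st_step ab_valid hi.
apply/allP => j; rewrite mem_iota add0n => /andP [_ hj].
have hsz : size (nth [::] (rows_of T) i.+1) = aa i.+1 by rewrite nth_rows_of // size_map size_iota.
rewrite hsz !ent_rows_of //; try lia.
rewrite (_ : st i.+1 + (aa i.+1 - bb i + j) = st i + j)%N; last lia.
have [u [eu ru cu]] := @val_at_inside T i (st i + j) (ltnW hi) (leq_addr _ _) ltac:(lia).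
have [v [ev rv cv]] := @val_at_inside T i.+1 (st i + j) hi ltac:(lia) ltac:(lia).
by rewrite eu ev; apply: ssyt_col; rewrite ?ru ?rv ?cu ?cv.
Qed.

Lemma rows_ok_column (Rs : seq (seq 'I_N)) c i k : map size Rs = a -> rows_ok b Rs ->
  (i < k)%N -> (k < size a)%N -> (st i <= c)%N -> (c < st k + aa k)%N ->
  (ent (nth [::] Rs i) (c - st i) < ent (nth [::] Rs k) (c - st k))%N.
Proof.
move=> hRs /rows_okP [_ hcol] hik hk hc1 hc2.
have hsz l : (l < size a)%N -> size (nth [::] Rs l) = aa l.
  by move=> hl; rewrite -hRs (nth_map [::]) // -(size_map size) hRs.
pose F l := ent (nth [::] Rs l) (c - st l).
have step l : (i <= l)%N -> (l < k)%N -> (F l < F l.+1)%N.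
  move=> hil hlk; have hl1 : (l.+1 < size a)%N by lia.
  have := st_mono ab_valid hil (ltnW hl1); have := end_mono ab_valid hlk hk.
  have := st_step ab_valid hl1; have [hb1 hb2] := overlap_le ab_valid hl1.
  move=> hst hend hmono; move/allP: (hcol l ltac:(rewrite -(size_map size) hRs //)).
  move=> /(_ (c - st l)%N); rewrite mem_iota add0n hsz // /F.
  by rewrite (_ : aa l.+1 - bb l + (c - st l) = c - st l.+1)%N; [apply; lia | lia].
have chain k' : (i < k')%N -> (k' <= k)%N -> (F i < F k')%N.
  elim: k' => [//|k' IH] hik' hk'.
  case: (ltngtP i k') => hik''; [|lia|by rewrite -hik''; apply: step; rewrite ?hik''].
  exact: ltn_trans (IH hik'' (ltnW hk')) (step _ (ltnW hik'') hk').
exact: chain.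
Qed.

Lemma rows_ok_ssyt Rs : map size Rs = a -> rows_ok b Rs -> is_ssyt (tableau_of Rs).
Proof.
move=> hRs hok; have /rows_okP [hrow _] := hok.
have hsz l : (l < size a)%N -> size (nth [::] Rs l) = aa l.
  by move=> hl; rewrite -hRs (nth_map [::]) // -(size_map size) hRs.
apply/forallP => u; apply/forallP => v.
have [hu1 hu2 hu3] := box_range u; have [hv1 hv2 hv3] := box_range v.
rewrite !ffunE; apply/andP; split; apply/implyP => /andP [/eqP e1 e2].
  rewrite -e1 in hv2 hv3 *; rewrite -!ent_nth ?hsz //; try lia.
  by apply: nondecr_mono; [apply: hrow; rewrite -(size_map size) hRs | lia | rewrite hsz //; lia].
rewrite -e1 in hv2 hv3 *; rewrite -!ent_nth ?hsz //; try lia.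
by apply: rows_ok_column.
Qed.

Lemma wt_rows_of (T : tableau) : \prod_(u : box a b) xv (T u) = wt_rows xv (rows_of T).
Proof.
have -> : wt_rows xv (rows_of T) =
    \prod_(i <- iota 0 (size a)) \prod_(c <- iota (st i) (aa i)) xv (val_at T i c).
  by rewrite /wt_rows /rows_of big_map; apply: eq_bigr => i _; rewrite /wt big_map.
rewrite -(big_allpairs_dep (h := fun i (c : nat) => (i, c)) (F := fun p => xv (val_at T p.1 p.2))).
rewrite (_ : \prod_(u : box a b) xv (T u) =
    \prod_(p <- [seq (brow u, bcol u) | u <- index_enum (box a b)]) xv (val_at T p.1 p.2)).
  apply: perm_big; apply: uniq_perm.
  - by rewrite map_inj_uniq ?index_enum_uniq // => u v [e1 e2]; apply: box_inj.
  - apply: allpairs_uniq_dep => [||[? ?] [? ?] _ _ /= [-> ->]] //; first exact: iota_uniq.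
    by move=> i _; apply: iota_uniq.
  move=> p; apply/mapP/allpairsPdep => [[u _ ->]|[i [c [hi hc ->]]]].
    by have [h1 h2 h3] := box_range u; exists (brow u), (bcol u); rewrite !mem_iota /= add0n h1 h2 h3.
  move: hi hc; rewrite !mem_iota /= add0n => hi /andP [hc1 hc2].
  have [u [eu ru cu]] := mkbox_some hi hc1 hc2.
  by exists u; rewrite ?mem_index_enum // ru cu.
by rewrite big_map; apply: eq_bigr => u _; rewrite /val_at mkboxE.
Qed.

Lemma skew_schur_rowsum_default : skew_schur xv a b = rowsum xv a b predT.
Proof.
rewrite rowsum_flat /skew_schur.
apply: (big_bij_seq _ _ (h := rows_of) (h' := tableau_of)).
- exact: index_enum_uniq.
- exact: uniq_row_lists.
- move=> T _ hT; split; rewrite ?wt_rows_of ?tableau_of_rows_of //.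
    by rewrite mem_row_lists map_size_rows_of.
  exact: ssyt_rows_ok.
- move=> Rs; rewrite mem_row_lists => /eqP hRs hok; split; rewrite ?rows_of_tableau_of //.
    exact: mem_index_enum.
  exact: rows_ok_ssyt.
Qed.

End Tableaux.

(* The skew Schur function of a valid diagram is its row-by-row sum.  The
   default entry is only needed when N > 0; for N = 0 both sides vanish as
   soon as the top row is nonempty. *)
Lemma skew_schur_rowsum (R : comPzRingType) (N : nat) (xv : 'I_N -> R) a b :
  valid a b -> (0 < head 0%N a)%N -> skew_schur xv a b = rowsum xv a b predT.
Proof.
case: N xv => [|N'] xv hv ha; last exact: (skew_schur_rowsum_default xv ord0 hv).
case: a hv ha => [//|a0 a'] hv /= ha.
have [u _] := @mkbox_some (a0 :: a') b 0 _ isT (leqnn _) ltac:(rewrite /=; lia).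
rewrite rowsum_cons big_seq_cond big1; last first.
  by move=> r /andP [hr _]; move: hr; rewrite mem_words; case: r => [/eqP hr|[]//]; rewrite -hr in ha.
by rewrite /skew_schur big1 // => T _; case: (T u).
Qed.

Section Standing.
Variables (sg ta sgb tab : seq nat).
Hypothesis hst : standing_hyp sg ta sgb tab.

Lemma standing_valid_sigma : valid (sg ++ [:: 1%N]) sgb.
Proof.
have [pos_sg _ ssgb _ [hlast _ hsg _]] := hst.
apply/validP => i; rewrite size_cat addn1 ltnS => hi.
rewrite nth_cat hi nth_cat; case: (ltnP i.+1 (size sg)) => hi1; first exact: hsg.
rewrite (_ : i.+1 - size sg = 0)%N /=; last lia.
rewrite (_ : nth 0%N sgb i = last 0%N sgb); last by rewrite (_ : i = (size sgb).-1) ?nth_last //; lia.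
by rewrite hlast ?leq_min ?leqnn ?andbT; [apply: (allP pos_sg); rewrite mem_nth | lia].
Qed.

Lemma standing_valid_tau : valid (1%N :: ta) tab.
Proof.
have [_ pos_ta _ _ [_ hhead _ hta]] := hst.
apply/validP => -[|i] /= hi; last by rewrite minnC; apply: hta; lia.
by rewrite nth0 hhead // leq_min leqnn /=; apply: (allP pos_ta); rewrite mem_nth.
Qed.

Lemma standing_sigma_last : (0 < size sg)%N ->
  exists sg' ss sgb', [/\ sg = sg' ++ [:: ss], sgb = sgb' ++ [:: 1%N], size sgb' = size sg',
     (0 < ss)%N & valid (sg' ++ [:: ss]) sgb'].
Proof.
move=> hs; have v := standing_valid_sigma.
have [pos_sg _ ssgb _ [hlast _ _ _]] := hst.
case/lastP: sg hs pos_sg ssgb hlast v => [//|sg' ss] _ pos_sg ssgb hlast v.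
case/lastP: sgb ssgb hlast v => [|sgb' c]; first by rewrite size_rcons.
rewrite !size_rcons last_rcons => -[ssgb] hlast; rewrite hlast // -!cats1 -catA valid_split //.
case/and3P => v' _ _; exists sg', ss, sgb'; split => //.
by move: pos_sg; rewrite -cats1 all_cat /= andbT => /andP [].
Qed.

Lemma standing_tau_first : (0 < size ta)%N ->
  exists t1 ta' tab', [/\ ta = t1 :: ta', tab = 1%N :: tab', size tab' = size ta',
     (0 < t1)%N & valid (t1 :: ta') tab'].
Proof.
move=> hs; have v := standing_valid_tau.
have [_ pos_ta _ stab [_ hhead _ _]] := hst.
case: ta hs pos_ta stab hhead v => [//|t1 ta'] _ /andP [t1_gt0 _].
case: tab => [//|c tab'] [stab] /= hhead; rewrite hhead // valid_cons2 => /andP [_ v].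
by exists t1, ta', tab'.
Qed.

End Standing.

Lemma skew_schur_split (R : comPzRingType) (N : nat) (xv : 'I_N -> R)
    (alpha abar : seq nat) u v beta bb y :
  all (fun k => 0 < k)%N alpha -> (0 < u)%N -> size abar = size alpha ->
  valid (alpha ++ [:: u]) abar -> (y <= minn u v)%N -> valid (v :: beta) bb ->
  skew_schur xv (alpha ++ [:: u, v & beta]) (abar ++ y :: bb) =
  rowsum xv (alpha ++ [:: u, v & beta]) (abar ++ y :: bb) predT.
Proof.
move=> pos u_gt0 hs vtop hy vbot; apply: skew_schur_rowsum.
  by rewrite valid_split // vtop hy.
by case: alpha pos {hs vtop} => [|a0 alpha] //= /andP [].
Qed.

Section ClosedForm.
Variables (R : comPzRingType) (N : nat) (xv : 'I_N -> R).
Variables (sg ta sgb tab : seq nat).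
Hypothesis hst : standing_hyp sg ta sgb tab.

Definition top_sum (m : nat) : R := rowsum xv (sg ++ [:: m]) sgb predT.
Definition bot_sum (n : nat) : R := rowsum xv (n :: ta) tab predT.
Definition join_sum (L : nat) : R := rowsum xv (sg ++ L :: ta) (sgb ++ tab) predT.

(* Branch x <= min(m, n) of K: a single step of the recurrence. *)
Lemma K_inner m n x : (0 < m)%N -> (0 < n)%N -> (x <= minn m n)%N ->
  skew_schur xv (sg ++ [:: m, n & ta]) (sgb ++ x :: tab) =
  top_sum m * bot_sum n - hsym_pred xv x * join_sum (m + n - x).+1.
Proof.
move=> m_gt0 n_gt0 hx; have [pos_sg _ ssgb _ _] := hst.
have vtop k : (0 < k)%N -> valid (sg ++ [:: k]) sgb.
  by move=> k_gt0; apply: valid_last_mono (standing_valid_sigma hst) _.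
have vbot k : (0 < k)%N -> valid (k :: ta) tab.
  by move=> k_gt0; apply: valid_first_mono (standing_valid_tau hst) _.
rewrite skew_schur_split ?vtop ?vbot //.
by apply: rowsum_recurrence; rewrite ?vtop ?vbot //; move: hx; rewrite leq_min; lia.
Qed.

(* K removes the last part of sigma and of sigma-bar by [take (size sg).-1]. *)
Lemma take_belast (s t : seq nat) y z : size t = size s ->
  take (size (s ++ [:: y])).-1 (t ++ [:: z]) = t.
Proof. by move=> hs; rewrite size_cat addn1 /= -hs take_size_cat. Qed.

(* Branch x = m + 1 <= n of K: the last row of sigma is merged into row m. *)
Lemma K_sigma m n : (0 < m)%N -> (m < n)%N ->
  (if size sg == 0%N then 0 else
   - skew_schur xv (take (size sg).-1 sg ++ [:: (m + last 0 sg)%N, n & ta])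
       (take (size sg).-1 sgb ++ m.+1 :: tab)) =
  top_sum m * bot_sum n - hsym xv m * join_sum n.
Proof.
move=> m_gt0 hmn; have [pos_sg _ ssgb _ _] := hst.
have vbot k : (0 < k)%N -> valid (k :: ta) tab.
  by move=> k_gt0; apply: valid_first_mono (standing_valid_tau hst) _.
case: eqP => [/size0nil esg | /eqP].
  have esgb : sgb = [::] by apply/size0nil; rewrite ssgb esg.
  by rewrite /top_sum /join_sum esg esgb /= subrr.
rewrite -lt0n => /(standing_sigma_last hst) [sg' [ss [sgb' [esg esgb ssgb' ss_gt0 v']]]].
move: pos_sg; rewrite /top_sum /join_sum esg esgb take_belast // take_belast // last_cat /=.
rewrite all_cat => /andP [pos_sg' _]; rewrite -!catA /=.
rewrite skew_schur_split ?vbot //; try lia; last by apply: valid_last_mono v' _; lia.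
rewrite rowsum_recurrence ?vbot //=; try lia; last by rewrite addKn.
rewrite !rowsum_overlap1 ?vbot //; try lia.
rewrite cats0 (addnC ss m) (_ : (m + ss + n - m.+1).+1 = ss + n)%N; last lia.
rewrite /bot_sum -/(hsym xv m).
by ring.
Qed.

(* Branch x = n + 1 <= m of K: the first row of tau is merged into row n. *)
Lemma K_tau m n : (0 < n)%N -> (n < m)%N ->
  (if size ta == 0%N then 0 else
   - skew_schur xv (sg ++ [:: m, (n + head 0 ta)%N & behead ta]) (sgb ++ n.+1 :: behead tab)) =
  top_sum m * bot_sum n - hsym xv n * join_sum m.
Proof.
move=> n_gt0 hnm; have [pos_sg _ ssgb stab _] := hst.
have vtop k : (0 < k)%N -> valid (sg ++ [:: k]) sgb.
  by move=> k_gt0; apply: valid_last_mono (standing_valid_sigma hst) _.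
case: eqP => [/size0nil eta | /eqP].
  have etab : tab = [::] by apply/size0nil; rewrite stab eta.
  by rewrite /bot_sum /join_sum eta etab cats0 mulrC subrr.
rewrite -lt0n => /(standing_tau_first hst) [t1 [ta' [tab' [eta etab stab' t1_gt0 v']]]].
rewrite /top_sum /bot_sum /join_sum eta etab /=.
rewrite skew_schur_split ?vtop //; try lia; last by apply: valid_first_mono v' _; lia.
rewrite rowsum_recurrence ?vtop //=; try lia; last by rewrite addKn.
rewrite (@rowsum_overlap1 _ _ xv [::] [::]) ?rowsum_overlap1 ?vtop //; try lia.
rewrite (_ : (m + (n + t1) - n.+1).+1 = m + t1)%N; last lia.
by rewrite -/(hsym xv n); ring.
Qed.

(* Branch x = m + 1 = n + 1 of K: both neighbouring rows are merged in. *)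
Lemma K_both m : (0 < m)%N ->
  (if (size sg == 0%N) || (size ta == 0%N) then 0 else
   skew_schur xv (take (size sg).-1 sg ++ [:: (m + last 0 sg)%N, (m + head 0 ta)%N & behead ta])
     (take (size sg).-1 sgb ++ m.+1 :: behead tab)) =
  top_sum m * bot_sum m - hsym xv m * join_sum m.
Proof.
move=> m_gt0; have [pos_sg _ ssgb stab _] := hst.
case: eqP => [/size0nil esg | /eqP] /=.
  have esgb : sgb = [::] by apply/size0nil; rewrite ssgb esg.
  by rewrite /top_sum /join_sum esg esgb /= subrr.
rewrite -lt0n => /(standing_sigma_last hst) [sg' [ss [sgb' [esg esgb ssgb' ss_gt0 v]]]].
case: eqP => [/size0nil eta | /eqP].
  have etab : tab = [::] by apply/size0nil; rewrite stab eta.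
  by rewrite /bot_sum /join_sum eta etab cats0 mulrC subrr.
rewrite -lt0n => /(standing_tau_first hst) [t1 [ta' [tab' [eta etab stab' t1_gt0 v']]]].
move: pos_sg; rewrite /top_sum /bot_sum /join_sum esg esgb eta etab.
rewrite take_belast // take_belast // last_cat /= all_cat => /andP [pos_sg' _]; rewrite -!catA /=.
have vm : valid [:: m, t1 & ta'] (1%N :: tab') by rewrite valid_cons2 /= leq_min m_gt0 t1_gt0.
have vsm : valid (sg' ++ [:: (ss + m)%N]) sgb' by apply: valid_last_mono v _; lia.
rewrite skew_schur_split //; try lia; [|by apply: valid_last_mono v _; lia|
  by apply: valid_first_mono v' _; lia].
rewrite rowsum_recurrence //=; try lia; [|by rewrite addKn|by rewrite addKn].
rewrite !rowsum_overlap1 //; try lia.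
rewrite (@rowsum_overlap1 _ _ xv [::] [::]) //.
rewrite cats0 (addnC m ss) (_ : (ss + m + (m + t1) - m.+1).+1 = ss + m + t1)%N; last lia.
by rewrite -/(hsym xv m); ring.
Qed.

Lemma Kfun_closed m n x : (0 < m)%N -> (0 < n)%N -> (x <= (minn m n).+1)%N ->
  Kfun xv sg ta sgb tab m n x =
  top_sum m * bot_sum n - hsym_pred xv x * join_sum (m + n - x).+1.
Proof.
move=> m_gt0 n_gt0 hx; rewrite /Kfun /=.
have [hxm|hxm] := leqP x m; have [hxn|hxn] := leqP x n.
- by apply: K_inner => //; rewrite leq_min hxm hxn.
- have -> : x = n.+1 by lia.
  rewrite eqxx !andbF /= (_ : (m + n - n.+1).+1 = m)%N; last lia.
  by apply: K_tau; lia.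
- have -> : x = m.+1 by lia.
  rewrite eqxx /= (_ : (m + n - m.+1).+1 = n)%N; last lia.
  by apply: K_sigma; lia.
have [-> en] : x = m.+1 /\ n = m by lia.
rewrite en eqxx /= (_ : (m + m - m.+1).+1 = m)%N; last lia.
exact: K_both.
Qed.

End ClosedForm.

Theorem lemma2p3 (R : comPzRingType) (N : nat) (xv : 'I_N -> R)
    (sg ta sgb tab : seq nat) (m n m' n' x x' : nat) :
  standing_hyp sg ta sgb tab ->
  (0 < m)%N -> (0 < n)%N -> (0 < m')%N -> (0 < n')%N ->
  (m + n = m' + n')%N ->
  (x <= minn (minn m n) (minn m' n') + 1)%N ->
  (x' <= minn (minn m n) (minn m' n') + 1)%N ->
  Kfun xv sg ta sgb tab m n x - Kfun xv sg ta sgb tab m' n' x =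
  Kfun xv sg ta sgb tab m n x' - Kfun xv sg ta sgb tab m' n' x'.
Proof.
move=> hst m_gt0 n_gt0 m'_gt0 n'_gt0 hsum hx hx'.
have bound y : (y <= minn (minn m n) (minn m' n') + 1)%N ->
    (y <= (minn m n).+1)%N /\ (y <= (minn m' n').+1)%N.
  by move=> hy; split; lia.
have [hx1 hx2] := bound x hx; have [hx1' hx2'] := bound x' hx'.
rewrite !(Kfun_closed xv hst) // hsum.
by ring.
Qed.
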